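(* Let $m\ge 2$ and $n\ge 1$ be integers and let $\mathcal P=(p_{i_1 i_2\dots i_m})\in\mathbb R^{[m,n]}$ be a transition probability tensor, i.e. $p_{i_1 i_2\dots i_m}\ge 0$ for all indices and $\sum_{i_1=1}^n p_{i_1 i_2\dots i_m}=1$ for all $(i_2,\dots,i_m)$. Let $R\in\mathbb R^{n\times n^{m-1}}$ be the flattening of $\mathcal P$ along the first index, and let $\mathbf{x}\in\mathbb R^n$ be a non-negative vector with $e^T\mathbf{x}\le 1$, where $e=(1,\dots,1)^T\in\mathbb R^n$. Let $\alpha\ge 0$. Then the $n\times n$ matrix $$-J(\mathbf{x}) = I-\alpha R\Big(I\otimes \mathbf{x}\otimes\cdots\otimes\mathbf{x}+\mathbf{x}\otimes I\otimes\mathbf{x}\otimes\cdots\otimes\mathbf{x}+\cdots+\mathbf{x}\otimes\cdots\otimes\mathbf{x}\otimes I\Big)$$ is non-singular whenever $\alpha<\frac{1}{m-1}$.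
   Context: $I$ denotes the $n\times n$ identity matrix and $\otimes$ the Kronecker product. Each summand inside the parentheses is a Kronecker product of $m-1$ factors, exactly one of which is $I$ and the remaining $m-2$ of which are $\mathbf{x}$ (viewed as an $n\times 1$ matrix); there are $m-1$ summands, one for each position of $I$, so each summand is an $n^{m-1}\times n$ matrix. The flattening $R$ along the first index is the $n\times n^{m-1}$ matrix whose column indexing is compatible with the Kronecker product, i.e. for all $y^{(2)},\dots,y^{(m)}\in\mathbb R^n$, $\big(R(y^{(2)}\otimes\cdots\otimes y^{(m)})\big)_i=\sum_{i_2,\dots,i_m=1}^n p_{i i_2\dots i_m}\,y^{(2)}_{i_2}\cdots y^{(m)}_{i_m}$. *)

From mathcomp Require Import all_boot all_order all_algebra.
Set Implicit Arguments. Unset Strict Implicit. Unset Printing Implicit Defensive.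
Import Order.TTheory GRing.Theory Num.Theory.
Local Open Scope ring_scope.

(* An order-m, dimension-n tensor p_{i1 i2 ... im} is represented as a function
   P i t where i : 'I_n is the first index i1 and t : {ffun 'I_(m.-1) -> 'I_n}
   is the tuple (i2,...,im) of remaining indices (t k = i_{k+2}).
   With this representation, the flattening R along the first index is the
   n x n^(m-1) "matrix" R i t = P i t, its columns indexed by (m-1)-tuples. *)
Definition tensor (R : Type) (m n : nat) := 'I_n -> {ffun 'I_(m.-1) -> 'I_n} -> R.

Definition flattening (R : Type) (m n : nat) (P : tensor R m n) :
  'I_n -> {ffun 'I_(m.-1) -> 'I_n} -> R := fun i t => P i t.

Definition transition_tensor (R : numDomainType) (m n : nat) (P : tensor R m n) :=
  (forall i t, 0 <= P i t) /\ (forall t, \sum_(i < n) P i t = 1).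

(* Entry (t, j) of the n^(m-1) x n Kronecker product  F_0 (x) ... (x) F_(m-2)
   where F_k = I (n x n) and F_l = x (n x 1) for l <> k; rows are indexed by the
   (m-1)-tuple t of row indices of the factors (compatible with the flattening),
   and the column index is j (the column indices of the x factors being trivial). *)
Definition kron_summand (R : numDomainType) (m n : nat) (x : 'cV[R]_n)
  (k : 'I_(m.-1)) (t : {ffun 'I_(m.-1) -> 'I_n}) (j : 'I_n) : R :=
  \prod_(l < m.-1) (if l == k then (t l == j)%:R else x (t l) 0).

Definition RKsum (R : numDomainType) (m n : nat) (P : tensor R m n) (x : 'cV[R]_n)
  : 'M[R]_n :=
  \matrix_(i < n, j < n)
     \sum_(t : {ffun 'I_(m.-1) -> 'I_n})
        flattening P i t * (\sum_(k < m.-1) kron_summand x k t j).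

Definition minusJ (R : numDomainType) (m n : nat) (P : tensor R m n) (x : 'cV[R]_n)
  (alpha : R) : 'M[R]_n :=
  1%:M - alpha *: RKsum P x.

(* Every column of R (sum_k K_k) has sum at most m - 1: a column of P sums to 1,
   and each Kronecker summand K_k, being I tensored with copies of a substochastic
   vector x, has column sums prod (e^T x) <= 1.  Hence A := alpha R (sum_k K_k) is
   a non-negative matrix whose column sums are at most alpha (m - 1) < 1, so A is a
   strict contraction for the l1 norm and I - A has trivial kernel. *)

From mathcomp Require Import all_boot all_order all_algebra.
Import Order.TTheory GRing.Theory Num.Theory.
Local Open Scope ring_scope.

Section ColumnSubstochastic.

Variables (R : realFieldType) (n : nat) (A : 'M[R]_n) (c : R).
Hypothesis A_ge0 : forall i j, 0 <= A i j.
Hypothesis colsum_le : forall j, \sum_i A i j <= c.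

Lemma l1norm_mulmx_le (u : 'cV[R]_n) :
  \sum_k `|(A *m u) k 0| <= c * \sum_k `|u k 0|.
Proof.
apply: le_trans (_ : \sum_k \sum_i A k i * `|u i 0| <= _).
  apply: ler_sum => k _; rewrite mxE; apply: le_trans (ler_norm_sum _ _ _) _.
  by apply: ler_sum => i _; rewrite normrM ger0_norm.
rewrite exchange_big big_distrr /=; apply: ler_sum => i _.
by rewrite -big_distrl /= ler_wpM2r.
Qed.

Lemma fixpoint_contraction_eq0 (u : 'cV[R]_n) : c < 1 -> A *m u = u -> u = 0.
Proof.
move=> c_lt1 Au.
set S := \sum_k `|u k 0|.
have S_le0 : S <= 0.
  have S_le : S <= c * S by rewrite /S -{1}Au l1norm_mulmx_le.
  have : S * (1 - c) <= 0 by rewrite mulrBr mulr1 subr_le0 mulrC.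
  by rewrite pmulr_lle0 // subr_gt0.
apply/colP => k; rewrite mxE; apply/eqP; rewrite -normr_eq0 eq_le normr_ge0 andbT.
apply: le_trans S_le0; rewrite /S (bigD1 k) //= lerDl; exact: sumr_ge0.
Qed.

Lemma unitmx_1B_colsum_lt1 : c < 1 -> 1%:M - A \in unitmx.
Proof.
move=> c_lt1; rewrite -unitmx_tr -row_free_unit; apply: inj_row_free => v v0.
have ker : (1%:M - A) *m v^T = 0.
  by apply: trmx_inj; rewrite trmx_mul trmxK v0 trmx0.
have Av : A *m v^T = v^T.
  by rewrite mulmxBl mul1mx in ker; rewrite -(subr0_eq ker).
by rewrite -[v]trmxK (fixpoint_contraction_eq0 _ c_lt1 Av) trmx0.
Qed.

End ColumnSubstochastic.

Section KroneckerSummands.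

Variables (R : realFieldType) (m n : nat) (x : 'cV[R]_n).
Hypothesis x_ge0 : forall i, 0 <= x i 0.

Lemma kron_summand_ge0 (k : 'I_(m.-1)) (t : {ffun 'I_(m.-1) -> 'I_n}) (j : 'I_n) :
  0 <= kron_summand x k t j.
Proof. by apply: prodr_ge0 => l _; case: (l == k). Qed.

Lemma kron_summand_colsum_le1 (k : 'I_(m.-1)) (j : 'I_n) :
  \sum_(i < n) x i 0 <= 1 ->
  \sum_(t : {ffun 'I_(m.-1) -> 'I_n}) kron_summand x k t j <= 1.
Proof.
move=> x_sum_le1.
rewrite -(bigA_distr_bigA (fun l a => if l == k then (a == j)%:R else x a 0)).
apply: prodr_ile1 => l _; case: (l == k); last by rewrite sumr_ge0.
rewrite sumr_ge0 //= (bigD1 j) //= eqxx big1 ?addr0 // => a /negbTE -> //.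
Qed.

Variable P : tensor R m n.
Hypothesis P_transition : transition_tensor P.

Lemma RKsum_ge0 i j : 0 <= RKsum P x i j.
Proof.
case: P_transition => P_ge0 _; rewrite mxE; apply: sumr_ge0 => t _.
by rewrite mulr_ge0 // sumr_ge0 // => k _; apply: kron_summand_ge0.
Qed.

Lemma RKsum_colsum_le j :
  \sum_(i < n) x i 0 <= 1 -> \sum_i RKsum P x i j <= (m.-1)%:R.
Proof.
case: P_transition => _ P_colsum x_sum_le1.
under eq_bigr => i _ do rewrite mxE.
rewrite exchange_big /=.
under eq_bigr => t _ do rewrite -big_distrl /= P_colsum mul1r.
rewrite exchange_big /=; apply: le_trans (_ : \sum_(k < m.-1) (1 : R) <= _).
  by apply: ler_sum => k _; apply: kron_summand_colsum_le1.
by rewrite sumr_const card_ord.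
Qed.

End KroneckerSummands.

Theorem proposition3p1 (R : realFieldType) (m n : nat) (P : tensor R m n)
  (x : 'cV[R]_n) (alpha : R) :
  (2 <= m)%N -> (1 <= n)%N ->
  transition_tensor P ->
  (forall i, 0 <= x i 0) -> \sum_(i < n) x i 0 <= 1 ->
  0 <= alpha -> alpha < 1 / (m - 1)%:R ->
  minusJ P x alpha \in unitmx.
Proof.
move=> m_ge2 _ P_transition x_ge0 x_sum_le1 alpha_ge0 alpha_lt.
apply: (@unitmx_1B_colsum_lt1 _ _ _ (alpha * (m.-1)%:R)).
- by move=> i j; rewrite mxE mulr_ge0 // RKsum_ge0.
- move=> j; under eq_bigr => i _ do rewrite mxE.
  by rewrite -big_distrr /= ler_wpM2l // RKsum_colsum_le.
- have m1_gt0 : 0 < (m.-1)%:R :> R by rewrite ltr0n -subn1 subn_gt0.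
  by rewrite -ltr_pdivlMr // -subn1.
Qed.
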